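(* Let $p$ be an odd prime and let $L$ be a $\mathbb{Z}_p$-Lie lattice with soluble radical $R$. Then $R$ is isolated, i.e. $R=\mathrm{iso}_L(R)$. Moreover, if $L$ is saturable, then $R$ is PF-embedded in $L$.
   Context: A $\mathbb{Z}_p$-Lie lattice is a Lie algebra over $\mathbb{Z}_p$ free of finite rank as a module. Its soluble radical is its unique maximal soluble Lie ideal. For a Lie sublattice $M$ of $L$, $\mathrm{iso}_L(M)=L\cap(\mathbb{Q}_p\otimes M)$. For an ideal $M$ of $L$, a potent filtration of $M$ in $L$ is a descending series $(M_i)$ of ideals of $L$ with $M_1=M$, $\bigcap M_i=0$, $[M_i,L]\subseteq M_{i+1}$, $[M_i,L,\ldots,L]\subseteq pM_{i+1}$ ($p-1$ copies of $L$, left-normed); $M$ is PF-embedded if one exists; $L$ is saturable iff it admits a potent filtration of itself. *)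

From HB Require Import structures.
From mathcomp Require Import all_boot all_order all_algebra.
From mathcomp Require Import boolp.
Set Implicit Arguments. Unset Strict Implicit. Unset Printing Implicit Defensive.
Import Order.TTheory GRing.Theory Num.Theory.
Local Open Scope ring_scope.
Notation "m %%Z d" := (modz m d) (at level 40, left associativity).

(* The p-adic integers Z_p, built as the inverse limit of the Z/p^n Z:      *)
(* an element is a sequence x with x n in [0, p^n) and x (n+1) = x n mod p^n *)
(* (residues are represented by their canonical representative in int).     *)
(* As for 'F_p in MathComp, the base used is b := p.-2.+2 (= p for p >= 2),  *)
(* so that the construction is a genuine ring for every p.                  *)

Section PAdic.
Variable p : nat.
Definition zbase : nat := p.-2.+2.
Definition zmodn (n : nat) : int := (zbase ^ n)%N%:Z.

Record padic := PAdic {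
  pval : nat -> int;
  pvalP : forall n, (pval n.+1 %%Z zmodn n)%Z = pval n }.

Lemma padic_inj (x y : padic) : pval x = pval y -> x = y.
Proof.
case: x y => [f fP] [g gP] /= efg; subst g.
by rewrite (Prop_irrelevance fP gP).
Qed.

HB.instance Definition _ := gen_eqMixin padic.
HB.instance Definition _ := gen_choiceMixin padic.

Lemma modz_mulm (m : int) n :
  ((m %%Z zmodn n.+1) %%Z zmodn n = m %%Z zmodn n)%Z.
Proof.
have -> : zmodn n.+1 = zmodn n * (zbase%:Z).
  by rewrite /zmodn expnSr PoszM.
rewrite [in RHS](divz_eq m (zmodn n * zbase%:Z)).
by rewrite (mulrC (zmodn n)) mulrA modzMDl.
Qed.

Lemma reduce_ok (f : nat -> int) :
  (forall n, f n.+1 = f n %[mod zmodn n])%Z ->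
  forall n, ((f n.+1 %%Z zmodn n.+1) %%Z zmodn n)%Z = (f n %%Z zmodn n)%Z.
Proof. move=> H n; rewrite modz_mulm; exact: H. Qed.

Definition mkpadic (f : nat -> int)
  (H : (forall n, f n.+1 = f n %[mod zmodn n])%Z) : padic :=
  @PAdic (fun n => f n %%Z zmodn n)%Z (reduce_ok H).

Lemma pvalE x n : (pval x n %%Z zmodn n)%Z = pval x n.
Proof. by rewrite -(pvalP x n) modz_mod. Qed.

Lemma zero_ok n : (0 : int) = 0 %[mod zmodn n]%Z.
Proof. by []. Qed.
Definition pzero := mkpadic (f := fun _ => 0) zero_ok.

Lemma one_ok n : (1 : int) = 1 %[mod zmodn n]%Z.
Proof. by []. Qed.
Definition pone := mkpadic (f := fun _ => 1) one_ok.

Lemma add_ok (x y : padic) n :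
  (pval x n.+1 + pval y n.+1 = pval x n + pval y n %[mod zmodn n])%Z.
Proof. by rewrite -[LHS]modzDm !pvalP. Qed.
Definition padd x y := mkpadic (f := fun n => pval x n + pval y n) (add_ok x y).

Lemma opp_ok (x : padic) n :
  (- pval x n.+1 = - pval x n %[mod zmodn n])%Z.
Proof. by rewrite -[LHS]modzNm pvalP. Qed.
Definition popp x := mkpadic (f := fun n => - pval x n) (opp_ok x).

Lemma mul_ok (x y : padic) n :
  (pval x n.+1 * pval y n.+1 = pval x n * pval y n %[mod zmodn n])%Z.
Proof. by rewrite -[LHS]modzMml -[LHS]modzMmr !pvalP. Qed.
Definition pmul x y := mkpadic (f := fun n => pval x n * pval y n) (mul_ok x y).

Lemma peqP (x y : padic) : (forall n, pval x n = pval y n) -> x = y.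
Proof. by move=> H; apply: padic_inj; apply: funext. Qed.

Lemma paddA : associative padd.
Proof. by move=> x y z; apply: peqP => n /=; rewrite modzDml modzDmr addrA. Qed.
Lemma paddC : commutative padd.
Proof. by move=> x y; apply: peqP => n /=; rewrite addrC. Qed.
Lemma padd0 : left_id pzero padd.
Proof. by move=> x; apply: peqP => n /=; rewrite mod0z add0r pvalE. Qed.
Lemma paddN : left_inverse pzero popp padd.
Proof. by move=> x; apply: peqP => n /=; rewrite modzDml addNr. Qed.

HB.instance Definition _ := GRing.isZmodule.Build padic paddA paddC padd0 paddN.

Lemma pmulA : associative pmul.
Proof. by move=> x y z; apply: peqP => n /=; rewrite modzMml modzMmr mulrA. Qed.
Lemma pmulC : commutative pmul.
Proof. by move=> x y; apply: peqP => n /=; rewrite mulrC. Qed.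
Lemma pmul1 : left_id pone pmul.
Proof. by move=> x; apply: peqP => n /=; rewrite modzMml mul1r pvalE. Qed.
Lemma pmulDl : left_distributive pmul (@GRing.add padic).
Proof.
move=> x y z; apply: peqP => n /=.
by rewrite modzMml modzDm mulrDl.
Qed.
Lemma pone_neq0 : pone != (0 : padic).
Proof.
apply/eqP => /(congr1 (fun x => pval x 1)) /=.
by rewrite mod0z /zmodn expn1 modz_small.
Qed.

HB.instance Definition _ :=
  GRing.Zmodule_isComNzRing.Build padic pmulA pmulC pmul1 pmulDl pone_neq0.

End PAdic.

Section Lie.
Variable p : nat.
Variable L : lmodType (padic p).
Variable br : L -> L -> L.

Definition lie_bracket : Prop :=
  [/\ forall (a : (padic p)) x y z, br (a *: x + y) z = a *: br x z + br y z,
      forall (a : (padic p)) x y z, br z (a *: x + y) = a *: br z x + br z y,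
      forall x, br x x = 0 &
      forall x y z, br x (br y z) + br y (br z x) + br z (br x y) = 0].

Definition free_finite_rank : Prop :=
  exists (n : nat) (f : L -> 'rV[(padic p)]_n),
    (forall (a : (padic p)) x y, f (a *: x + y) = a *: f x + f y) /\ bijective f.

Definition subset (M N : L -> Prop) := forall x, M x -> N x.
Definition seteq (M N : L -> Prop) := forall x, M x <-> N x.

Definition submodule (M : L -> Prop) : Prop :=
  [/\ M 0, forall x y, M x -> M y -> M (x + y) &
      forall (a : (padic p)) x, M x -> M (a *: x)].

Definition span (S : L -> Prop) : L -> Prop :=
  fun x => forall N, submodule N -> subset S N -> N x.

Definition lie_ideal (M : L -> Prop) : Prop :=
  submodule M /\ forall x y, M x -> M (br x y).

Fixpoint derived (M : L -> Prop) (k : nat) : L -> Prop :=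
  match k with
  | 0 => M
  | k.+1 => span (fun z => exists x y,
                    [/\ derived M k x, derived M k y & z = br x y])
  end.

Definition soluble (M : L -> Prop) : Prop :=
  exists k, forall x, derived M k x -> x = 0.

Definition soluble_ideal (M : L -> Prop) : Prop := lie_ideal M /\ soluble M.

Definition maximal_soluble_ideal (M : L -> Prop) : Prop :=
  soluble_ideal M /\
  forall J, soluble_ideal J -> subset M J -> subset J M.

Definition soluble_radical (R : L -> Prop) : Prop :=
  maximal_soluble_ideal R /\
  forall J, maximal_soluble_ideal J -> seteq J R.

(* iso_L(M) = L ∩ (Q_p ⊗ M) = { x in L | p^k x in M for some k }. *)
Definition iso (M : L -> Prop) : L -> Prop :=
  fun x => exists k : nat, M ((p ^ k)%:R *: x).

Definition isolated (M : L -> Prop) : Prop := seteq M (iso M).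

Definition lnbr (x : L) (ys : seq L) : L := foldl br x ys.

Definition potent_filtration (Ms : nat -> L -> Prop) (N : L -> Prop) : Prop :=
  [/\ forall i, (0 < i)%N -> lie_ideal (Ms i),
      forall i, (0 < i)%N -> subset (Ms i.+1) (Ms i) &
      seteq (Ms 1%N) N] /\
  [/\
      forall x, (forall i, (0 < i)%N -> Ms i x) -> x = 0,
      forall i x y, (0 < i)%N -> Ms i x -> Ms i.+1 (br x y) &
      forall i x (ys : seq L), (0 < i)%N -> size ys = p.-1 -> Ms i x ->
        exists z, Ms i.+1 z /\ lnbr x ys = p%:R *: z].

Definition PF_embedded (N : L -> Prop) : Prop :=
  exists Ms, potent_filtration Ms N.

Definition saturable : Prop := PF_embedded (fun _ => True).

End Lie.

From Pilot Require Import Defs.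
From HB Require Import structures.
From mathcomp Require Import all_boot all_order all_algebra.
Set Implicit Arguments. Unset Strict Implicit. Unset Printing Implicit Defensive.
Import Order.TTheory GRing.Theory Num.Theory.
Local Open Scope ring_scope.

(* Isolation: iso R is again a soluble ideal, because brackets commute with
   multiplication by powers of p and L is torsion-free, so R = iso R by
   maximality. PF-embedding: intersecting a potent filtration of L with R
   gives one of R; the divisibility by p in the last axiom survives because
   p z in R forces z in R when R is isolated. *)

Section PadicTorsionFree.
Variable p : nat.

Lemma zbase_prime : prime p -> zbase p = p.
Proof. by move=> /prime_gt1; rewrite /zbase; case: p => [|[|q]]. Qed.

Lemma zmodn_gt0 n : 0 < zmodn p n.
Proof. by rewrite ltz_nat expn_gt0. Qed.

Lemma zmodnD k n : zmodn p (k + n) = zmodn p k * zmodn p n.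
Proof. by rewrite /zmodn expnD PoszM. Qed.

Lemma modz_zmodnD (m : int) k n :
  ((m %%Z zmodn p (k + n)) %%Z zmodn p n = m %%Z zmodn p n)%Z.
Proof. by rewrite [in RHS](divz_eq m (zmodn p (k + n))) zmodnD mulrA modzMDl. Qed.

Lemma pval_modz_zmodnD (b : padic p) k n :
  (pval b (k + n) %%Z zmodn p n)%Z = pval b n.
Proof.
elim: k => [|k IHk]; first by rewrite pvalE.
by rewrite addSn -IHk -(pvalP b (k + n)) modz_zmodnD.
Qed.

Lemma pval_natr m n : pval (m%:R : padic p) n = (m%:Z %%Z zmodn p n)%Z.
Proof.
elim: m => [|m IHm]; first by rewrite /= mod0z.
by rewrite mulrS /= IHm modzDm intS.
Qed.

(* At precision [k + n] the hypothesis reads [zbase^k * pval b n = 0] modulo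
   [zbase^(k + n)], that is [pval b n = 0] modulo [zbase^n]. *)
Lemma padic_mul_zbaseX_eq0 k (b : padic p) :
  ((zbase p ^ k)%N%:R : padic p) * b = 0 -> b = 0.
Proof.
move=> hb; apply: peqP => n; rewrite /= mod0z -(pval_modz_zmodnD b k n).
have := congr1 (fun x => pval x (k + n)) hb => /=.
rewrite pval_natr modzMml mod0z zmodnD -mulz_modr ?zmodn_gt0 // => /eqP.
by rewrite mulf_eq0 gt_eqF ?zmodn_gt0 // => /eqP.
Qed.

End PadicTorsionFree.

Section LieLattice.
Variables (p : nat) (L : lmodType (padic p)).

Lemma span_submodule (S : L -> Prop) : submodule (Defs.span S).
Proof.
split=> [N [] //|x y hx hy N hN hS|a x hx N hN hS]; case: (hN) => _ hD hZ.
- by apply: hD; [apply: hx | apply: hy].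
- by apply: hZ; apply: hx.
Qed.

Lemma subset_span (S : L -> Prop) : Defs.subset S (Defs.span S).
Proof. by move=> x hx N _; apply. Qed.

Lemma scale_pexpnD a b (x : L) :
  ((p ^ a)%N%:R : padic p) *: (((p ^ b)%N%:R : padic p) *: x)
  = ((p ^ (a + b))%N%:R : padic p) *: x.
Proof. by rewrite scalerA -natrM expnD. Qed.

Lemma iso_submodule (N : L -> Prop) : submodule N -> submodule (iso N).
Proof.
move=> [N0 ND NZ]; split.
- by exists 0%N; rewrite scaler0.
- move=> x y [a ha] [b hb]; exists (b + a)%N; rewrite scalerDr.
  by apply: ND; [rewrite -scale_pexpnD | rewrite addnC -scale_pexpnD]; apply: NZ.
- by move=> c x [a ha]; exists a; rewrite scalerA mulrC -scalerA; apply: NZ.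
Qed.

Lemma subset_iso (N : L -> Prop) : Defs.subset N (iso N).
Proof. by move=> x hx; exists 0%N; rewrite scale1r. Qed.

Lemma free_finite_rank_scale_pexpn_eq0 : zbase p = p -> free_finite_rank L ->
  forall k (x : L), ((p ^ k)%N%:R : padic p) *: x = 0 -> x = 0.
Proof.
move=> zbase_p [n [f [f_lin [g fK _]]]] k x hx.
have f0 : f 0 = 0.
  by apply: (addrI (f 0)); rewrite addr0 -{1}(scale1r (f 0)) -f_lin scale1r addr0.
have fx : f x = 0.
  apply/rowP => i; rewrite mxE; apply: (@padic_mul_zbaseX_eq0 p k).
  have := congr1 (fun v : 'rV_n => v 0 i) (f_lin (p ^ k)%N%:R x 0).
  by rewrite addr0 hx f0 addr0 !mxE zbase_p => <-.
by rewrite -(fK x) fx -f0 fK.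
Qed.

Variables (br : L -> L -> L) (hLie : lie_bracket br).

Lemma br0l z : br 0 z = 0.
Proof.
case: hLie => brDl _ _ _; apply: (addrI (br 0 z)).
by rewrite addr0 -{1}(scale1r (br 0 z)) -brDl scale1r addr0.
Qed.

Lemma br0r z : br z 0 = 0.
Proof.
case: hLie => _ brDr _ _; apply: (addrI (br z 0)).
by rewrite addr0 -{1}(scale1r (br z 0)) -brDr scale1r addr0.
Qed.

Lemma brZl a x z : br (a *: x) z = a *: br x z.
Proof. by case: hLie => brDl _ _ _; rewrite -[a *: x]addr0 brDl br0l addr0. Qed.

Lemma brZr a x z : br z (a *: x) = a *: br z x.
Proof. by case: hLie => _ brDr _ _; rewrite -[a *: x]addr0 brDr br0r addr0. Qed.

Lemma iso_lie_ideal (N : L -> Prop) : lie_ideal br N -> lie_ideal br (iso N).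
Proof.
move=> [hN NI]; split; first exact: iso_submodule.
by move=> x y [a ha]; exists a; rewrite -brZl; apply: NI.
Qed.

Lemma derived_iso (N : L -> Prop) j :
  Defs.subset (derived br (iso N) j) (iso (derived br N j)).
Proof.
elim: j => [//|j IHj] x /= hx; apply: hx.
  exact/iso_submodule/span_submodule.
move=> _ [y [z [/IHj[a hy] /IHj[b hz] ->]]]; exists (a + b)%N.
rewrite -scale_pexpnD -brZr -brZl; apply: subset_span.
by do 2!eexists; split; [exact: hy | exact: hz |].
Qed.

Hypothesis L_torsion_free :
  forall k (x : L), ((p ^ k)%N%:R : padic p) *: x = 0 -> x = 0.

Lemma soluble_iso (N : L -> Prop) : soluble br N -> soluble br (iso N).
Proof.
move=> [m hm]; exists m => x /derived_iso[k hk].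
by apply: (L_torsion_free (k := k)); apply: hm.
Qed.

Lemma maximal_soluble_ideal_isolated (N : L -> Prop) :
  maximal_soluble_ideal br N -> isolated N.
Proof.
move=> [[NI Nsol] Nmax] x; split; first exact: subset_iso.
by apply: Nmax; [split; [apply: iso_lie_ideal | apply: soluble_iso] | apply: subset_iso].
Qed.

Lemma lnbr_lie_ideal (N : L -> Prop) x ys : lie_ideal br N -> N x -> N (lnbr br x ys).
Proof. by move=> [_ NI]; elim: ys x => [|y ys IHys] x hx //=; apply/IHys/NI. Qed.

Lemma potent_filtration_meet Ms (M N : L -> Prop) :
  potent_filtration br Ms M -> lie_ideal br N -> Defs.subset N M ->
  (forall z, N (p%:R *: z) -> N z) ->
  potent_filtration br (fun i x => Ms i x /\ N x) N.
Proof.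
move=> [[MsI MsD Ms1] [Ms0 MsB MsP]] NI NM Np.
have [[N0 ND NZ] NB] := NI.
split; split.
- move=> i /MsI[[M0 MD MZ] MB]; split; first split.
  + by split.
  + by move=> x y [? ?] [? ?]; split; [apply: MD | apply: ND].
  + by move=> a x [? ?]; split; [apply: MZ | apply: NZ].
  + by move=> x y [? ?]; split; [apply: MB | apply: NB].
- by move=> i /MsD sub x [? ?]; split; [apply: sub |].
- by move=> x; split=> [[] // | hx]; split; [apply/Ms1/NM |].
- by move=> x hx; apply: Ms0 => i /hx[].
- by move=> i x y hi [? ?]; split; [apply: MsB | apply: NB].
- move=> i x ys hi hys [hMx hNx]; have [z [hz e]] := MsP i x ys hi hys hMx.
  by exists z; do !split=> //; apply: Np; rewrite -e; apply: lnbr_lie_ideal.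
Qed.

End LieLattice.

Theorem mainTheorem12 (p : nat) (pP : prime p) (p_odd : odd p)
  (L : lmodType (padic p)) (br : L -> L -> L)
  (hLie : lie_bracket br) (hfree : free_finite_rank L)
  (R : L -> Prop) (hR : soluble_radical br R) :
  isolated R /\ (saturable br -> PF_embedded br R).
Proof.
have L_torsion_free := free_finite_rank_scale_pexpn_eq0 (zbase_prime pP) hfree.
have [[[RI _] _] _] := hR.
have R_isolated : isolated R.
  by apply: maximal_soluble_ideal_isolated hLie L_torsion_free _ hR.1.
split=> // [[Ms hMs]]; exists (fun i x => Ms i x /\ R x).
apply: potent_filtration_meet hMs RI _ _ => // z hz.
by apply/R_isolated; exists 1%N; rewrite expn1.
Qed.
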